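(* Let $\mathbf{H}$, $\mathbf{B}$, $\mathbf{J}$ be smooth vector fields on $\mathbb{R}^3$ (magnetic field intensity, magnetic flux density and current density), with $\mathbf{B} = \mu \mathbf{H}$ for a positive function $\mu$ (the permeability). Let $V = \operatorname{Supp}(\mathbf{B}) \cap \operatorname{Supp}(\mathbf{J})$ and suppose $\mathbf{B}$ is a near force-free field, i.e. on every connected component of $V$, $$|\mathbf{J}|^2|\mathbf{B}|^2 > |\mathbf{J}\times\mathbf{B}|^2 .$$ Suppose moreover that (i) displacement currents are negligible, so that $\operatorname{curl}\mathbf{H} = \mathbf{J}$, and (ii) $\operatorname{Supp}(\mathbf{B}) = \operatorname{Supp}(\mathbf{H})$, so that $V = \operatorname{Supp}(\mathbf{H}) \cap \operatorname{Supp}(\mathbf{J})$. Then on any connected component of $V$, the function $\mathbf{H}\cdot\operatorname{curl}\mathbf{H}$ is nonzero at every point and does not change sign.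
   Context: $\operatorname{Supp}(\mathbf{F})$ denotes the support of a vector field $\mathbf{F}$. The relation $\mathbf{B}=\mu\mathbf{H}$ (absence of magnetizable media) is the paper's standing physical setting for this section. *)

From HB Require Import structures.
From mathcomp Require Import all_boot all_order all_algebra.
From mathcomp Require Import all_classical all_reals all_analysis.
Set Implicit Arguments. Unset Strict Implicit. Unset Printing Implicit Defensive.
Import Order.TTheory GRing.Theory Num.Theory.
Import numFieldNormedType.Exports.
Local Open Scope classical_set_scope.
Local Open Scope ring_scope.

Section Vec3.
Variable R : realType.

Definition vec3 (a b c : R) : 'rV[R]_3 := \row_(i < 3) (nth 0 [:: a; b; c] i).

Definition dot3 (u v : 'rV[R]_3) : R := \sum_(i < 3) u ord0 i * v ord0 i.

Definition normsq3 (u : 'rV[R]_3) : R := dot3 u u.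

Definition c3 (u : 'rV[R]_3) (k : nat) : R := nth 0 [:: u ord0 ord0; u ord0 (inord 1); u ord0 (inord 2)] k.

Definition cross3 (u v : 'rV[R]_3) : 'rV[R]_3 :=
  vec3 (c3 u 1 * c3 v 2 - c3 u 2 * c3 v 1)
       (c3 u 2 * c3 v 0 - c3 u 0 * c3 v 2)
       (c3 u 0 * c3 v 1 - c3 u 1 * c3 v 0).

Definition partial (j : 'I_3) (F : 'rV[R]_3 -> 'rV[R]_3) (x : 'rV[R]_3) : 'rV[R]_3 :=
  'D_(delta_mx 0 j) F x.

(* d F_i / d x_j *)
Definition pd (j i : nat) (F : 'rV[R]_3 -> 'rV[R]_3) (x : 'rV[R]_3) : R :=
  c3 (partial (inord j) F x) i.

Definition curl (F : 'rV[R]_3 -> 'rV[R]_3) (x : 'rV[R]_3) : 'rV[R]_3 :=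
  vec3 (pd 1 2 F x - pd 2 1 F x)
       (pd 2 0 F x - pd 0 2 F x)
       (pd 0 1 F x - pd 1 0 F x).

Fixpoint Ck (n : nat) (F : 'rV[R]_3 -> 'rV[R]_3) : Prop :=
  match n with
  | 0 => continuous F
  | n'.+1 => (forall x, differentiable F x) /\ (forall j : 'I_3, Ck n' (partial j F))
  end.

Definition smooth (F : 'rV[R]_3 -> 'rV[R]_3) : Prop := forall n, Ck n F.

Definition Supp (F : 'rV[R]_3 -> 'rV[R]_3) : set 'rV[R]_3 :=
  closure [set x | F x != 0].

End Vec3.

(** Lagrange's identity gives |J x B|^2 = |J|^2 |B|^2 - (J . B)^2, so near
    force-freeness says exactly that J . B = mu (H . curl H) vanishes nowhere on
    V, and then neither does H . curl H.  Being continuous, it maps each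
    connected component of V onto an interval of R avoiding 0, hence it has
    constant sign there. *)
From HB Require Import structures.
From mathcomp Require Import all_boot all_order all_algebra.
From mathcomp Require Import all_classical all_reals all_analysis.
From mathcomp Require Import ring lra.

Set Implicit Arguments.
Unset Strict Implicit.
Unset Printing Implicit Defensive.
Import Order.TTheory GRing.Theory Num.Theory.
Import numFieldNormedType.Exports.
Local Open Scope classical_set_scope.
Local Open Scope ring_scope.

Section Vec3Algebra.
Variable R : realType.
Implicit Types u v : 'rV[R]_3.

Lemma dot3E u v : dot3 u v = c3 u 0 * c3 v 0 + c3 u 1 * c3 v 1 + c3 u 2 * c3 v 2.
Proof.
rewrite /dot3 !big_ord_recr big_ord0 /= add0r /c3 /=.
by congr (_ * _ + _ * _ + _ * _); congr (_ _ _); apply: val_inj; rewrite /= ?inordK.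
Qed.

Lemma c3_vec3 (a b c : R) k : (k < 3)%N -> c3 (vec3 a b c) k = nth 0 [:: a; b; c] k.
Proof. by case: k => [|[|[|k]]] // _; rewrite /c3 /vec3 /= !mxE //= inordK. Qed.

Lemma normsq3_cross3 u v :
  normsq3 (cross3 u v) = normsq3 u * normsq3 v - dot3 u v ^+ 2.
Proof. by rewrite /normsq3 !dot3E /cross3 !c3_vec3 //=; ring. Qed.

Lemma dot3C u v : dot3 u v = dot3 v u.
Proof. by rewrite !dot3E; ring. Qed.

Lemma dot3Zr u v a : dot3 u (a *: v) = a * dot3 u v.
Proof. by rewrite /dot3 mulr_sumr; apply: eq_bigr => i _; rewrite mxE mulrCA. Qed.

Lemma dot3_neq0 u v : normsq3 (cross3 u v) < normsq3 u * normsq3 v -> dot3 u v != 0.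
Proof.
rewrite normsq3_cross3; apply: contraTneq => ->.
by rewrite expr0n subr0 ltxx.
Qed.

Lemma continuous_dot3 (T : topologicalType) (F G : T -> 'rV[R]_3) :
  continuous F -> continuous G -> continuous (fun x => dot3 (F x) (G x)).
Proof.
move=> cF cG x.
have coordC (K : T -> 'rV[R]_3) i : continuous K -> {for x, continuous (fun y => K y ord0 i)}.
  by move=> cK; exact: continuous_comp (cK x) (@coord_continuous R 1 3 ord0 i (K x)).
pose f i y := F y ord0 i * G y ord0 i.
have -> : (fun y => dot3 (F y) (G y)) = f 0 + f 1 + f 2.
  apply: funext => y; rewrite /dot3 !big_ord_recr big_ord0 /= add0r /f.
  by congr (_ * _ + _ * _ + _ * _); congr (_ _ _); apply: val_inj.
by apply: continuousD; [apply: continuousD|]; apply: continuousM; exact: coordC.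
Qed.

End Vec3Algebra.

Lemma connected_continuous_sign (R : realType) (T : topologicalType)
    (A : set T) (f : T -> R) :
  connected A -> {within A, continuous f} -> (forall x, A x -> f x != 0) ->
  forall x y, A x -> A y -> 0 < f x * f y.
Proof.
move=> cA cf nz x y Ax Ay.
have itv : is_interval (f @` A).
  exact/connected_intervalP/connected_continuous_connected.
wlog le_xy : x y Ax Ay / f x <= f y.
  move=> hwlog; case: (leP (f x) (f y)) => [|/ltW] le; first exact: hwlog.
  by rewrite mulrC; exact: hwlog.
rewrite ltNge; apply/negP => le0.
have [fx0 fy0] : f x <= 0 /\ 0 <= f y.
  by split; rewrite leNgt; apply/negP => p; nra.
have [z Az fz0] : (f @` A) 0 by apply: (itv (f x) (f y)); [exists x|exists y|lra].
by move: (nz z Az); rewrite fz0 eqxx.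
Qed.

Theorem lemma2p31 (R : realType) (H B J : 'rV[R]_3 -> 'rV[R]_3) (mu : 'rV[R]_3 -> R) :
  smooth H -> smooth B -> smooth J ->
  (forall x, 0 < mu x) ->
  (forall x, B x = mu x *: H x) ->
  (* near force-free on every connected component of V = Supp B `&` Supp J *)
  (forall x0, (Supp B `&` Supp J) x0 ->
     forall x, connected_component (Supp B `&` Supp J) x0 x ->
       normsq3 (cross3 (J x) (B x)) < normsq3 (J x) * normsq3 (B x)) ->
  (* (i) negligible displacement currents *)
  (forall x, curl H x = J x) ->
  (* (ii) equal supports *)
  Supp B = Supp H ->
  forall x0, (Supp H `&` Supp J) x0 ->
    (forall x, connected_component (Supp H `&` Supp J) x0 x ->
       dot3 (H x) (curl H x) != 0) /\
    (forall x y, connected_component (Supp H `&` Supp J) x0 x ->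
       connected_component (Supp H `&` Supp J) x0 y ->
       0 < dot3 (H x) (curl H x) * dot3 (H y) (curl H y)).
Proof.
move=> sH _ sJ _ BE force_free curlE SBH x0 Vx0.
rewrite SBH in force_free.
have HJE : (fun x => dot3 (H x) (curl H x)) = fun x => dot3 (H x) (J x).
  by apply: funext => x; rewrite curlE.
have nz x : connected_component (Supp H `&` Supp J) x0 x -> dot3 (H x) (curl H x) != 0.
  move=> Cx; have := dot3_neq0 (force_free x0 Vx0 x Cx).
  by rewrite BE dot3Zr mulf_eq0 negb_or dot3C curlE => /andP[].
split=> //; apply: (connected_continuous_sign (f := fun x => dot3 (H x) (curl H x))) => //.
- exact: component_connected.
- by apply: continuous_subspaceT; rewrite HJE; exact: continuous_dot3 (sH 0%N) (sJ 0%N).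
Qed.
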